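(* Let $a<b$, $\lambda>0$, let $H(y):=\tfrac12\left(\tfrac12 y^2-\lambda\right)^2$ for $y\in\mathbb{R}$, let $\theta\in C[a,b]$ with $\min_{[a,b]}\theta>0$, and let $F\in C^1[a,b]$ with $F(a)=F(b)=0$, $F(x)\neq0$ for $x\in(a,b)$ and $\|F\|_\infty<(2\lambda/3)^{3/2}$. Let $X:=C_0[a,b]:=\{v\in C[a,b]\mid v(a)=v(b)=0\}$ and $K:X\to\mathbb{R}$, $K(v):=\int_a^b\theta\cdot(H\circ v-Fv)$. For $A\in\left(-(2\lambda/3)^{3/2},(2\lambda/3)^{3/2}\right)$ let $z_2(A)$ denote the unique solution in $\left(-\sqrt{2\lambda/3},\sqrt{2\lambda/3}\right)$ of $z\left(\tfrac12z^2-\lambda\right)=A$, and let $\overline v:=z_2\circ F$ (the unique stationary point of $K$). Then $\overline v$ is a local maximizer of $K$ with respect to the norm $\|\cdot\|_\infty$ on $X$, and $\overline v$ is not a local extremum point (neither local minimizer nor local maximizer) of $K$ with respect to the norm $\|\cdot\|_p$ on $X$ for any $p\in[1,4)$.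
   Context: $\|\cdot\|_p$ denotes the $L^p(a,b)$-norm restricted to $X$; $\|\cdot\|_\infty$ is the supremum norm. A stationary point of $K$ is a $v\in X$ with $\int_a^b\theta\left[v\left(\tfrac12v^2-\lambda\right)-F\right]h=0$ for all $h\in X$. *)

From Stdlib Require Import Reals.
From Coquelicot Require Import Coquelicot.
Open Scope R_scope.

Definition Icc (a b : R) : R -> Prop := fun x => a <= x <= b.

Definition cont_on (a b : R) (f : R -> R) : Prop :=
  forall x, a <= x <= b ->
    filterlim f (within (Icc a b) (locally x)) (locally (f x)).

Definition C1_on (a b : R) (f : R -> R) : Prop :=
  exists f' : R -> R, cont_on a b f' /\
    forall x, a <= x <= b ->
      filterlim (fun y => (f y - f x) / (y - x))
        (within (fun y => a <= y <= b /\ y <> x) (locally x)) (locally (f' x)).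

Definition C0 (a b : R) (v : R -> R) : Prop :=
  cont_on a b v /\ v a = 0 /\ v b = 0.

Definition Hfun (lam y : R) : R := / 2 * (/ 2 * y ^ 2 - lam) ^ 2.

Definition Kfun (a b lam : R) (theta F : R -> R) (v : R -> R) : R :=
  RInt (fun x => theta x * (Hfun lam (v x) - F x * v x)) a b.

Definition sup_norm (a b : R) (v : R -> R) : R :=
  real (Lub_Rbar (fun r => exists x, a <= x <= b /\ r = Rabs (v x))).

(* x^p for x >= 0, p > 0, with 0^p = 0 (Stdlib's Rpower 0 p = 1) *)
Definition rpow (x p : R) : R := if Rle_dec x 0 then 0 else Rpower x p.

Definition Lp_norm (a b p : R) (v : R -> R) : R :=
  rpow (RInt (fun x => rpow (Rabs (v x)) p) a b) (/ p).

Definition is_local_max (X : (R -> R) -> Prop) (N : (R -> R) -> R)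
  (K : (R -> R) -> R) (v : R -> R) : Prop :=
  X v /\ exists d, 0 < d /\
    forall w, X w -> N (fun x => w x - v x) < d -> K w <= K v.

Definition is_local_min (X : (R -> R) -> Prop) (N : (R -> R) -> R)
  (K : (R -> R) -> R) (v : R -> R) : Prop :=
  X v /\ exists d, 0 < d /\
    forall w, X w -> N (fun x => w x - v x) < d -> K v <= K w.

(* Since F = H'(vbar), the integrand of K(vbar + h) - K(vbar) is theta times the Taylor
   remainder h^2 (H''(vbar)/2 + vbar h/2 + h^2/8), where H''(vbar) = 3 vbar^2/2 - lam is
   uniformly negative because |vbar| < sqrt(2 lam/3). For uniformly small h this remainder is
   negative, so vbar is a local sup-norm maximizer. In L^p, however, a trapezoidal bump of any
   fixed height mu becomes small when its width shrinks. A tall bump lets the quartic term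
   h^4/8 dominate, so K increases; a low bump keeps the remainder negative, so K decreases. *)

From Stdlib Require Import Reals Lra Psatz FunctionalExtensionality.
From Coquelicot Require Import Coquelicot.
Open Scope R_scope.

Lemma filterlim_dominated {G : (R -> Prop) -> Prop} {FG : Filter G}
    (f g : R -> R) (x L : R) :
  filterlim f G (locally (f x)) ->
  G (fun y => Rabs (g y - g x) <= L * Rabs (f y - f x)) ->
  filterlim g G (locally (g x)).
Proof.
  intros Hf Hdom. apply filterlim_locally. intros eps.
  assert (HL : 0 < Rabs L + 1) by (generalize (Rabs_pos L); lra).
  assert (Heps : 0 < eps / (Rabs L + 1)) by (apply Rdiv_lt_0_compat; [apply cond_pos | lra]).
  generalize (filter_and _ _ (proj1 (filterlim_locally _ _) Hf (mkposreal _ Heps)) Hdom).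
  apply filter_imp. intros y [Hy Hle]. change (Rabs (f y - f x) < eps / (Rabs L + 1)) in Hy.
  change (Rabs (g y - g x) < eps).
  assert (Hfy : (Rabs L + 1) * Rabs (f y - f x) < eps).
  { apply Rmult_lt_reg_l with (/ (Rabs L + 1)). apply Rinv_0_lt_compat; lra.
    rewrite <- Rmult_assoc, Rinv_l by lra. unfold Rdiv in Hy. lra. }
  generalize (Rle_abs L) (Rabs_pos (f y - f x)). nra.
Qed.

Lemma lipschitz_continuous (f : R -> R) (L x : R) :
  (forall y, Rabs (f y - f x) <= L * Rabs (y - x)) -> continuous f x.
Proof.
  intros Hf. apply (filterlim_dominated (fun y => y) f x L).
  - apply filterlim_id.
  - apply filter_forall. exact Hf.
Qed.

Definition clamp (a b x : R) : R := Rmax a (Rmin b x).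

Lemma clamp_in a b x : a <= b -> a <= clamp a b x <= b.
Proof. intros; unfold clamp, Rmax, Rmin; repeat destruct Rle_dec; lra. Qed.

Lemma clamp_id a b x : a <= x <= b -> clamp a b x = x.
Proof. intros; unfold clamp, Rmax, Rmin; repeat destruct Rle_dec; lra. Qed.

Lemma clamp_lipschitz a b x y : a <= b -> Rabs (clamp a b y - clamp a b x) <= Rabs (y - x).
Proof.
  intros; unfold clamp, Rmax, Rmin; repeat destruct Rle_dec;
    unfold Rabs; repeat destruct Rcase_abs; lra.
Qed.

Lemma continuous_clamp a b x : a <= b -> continuous (clamp a b) x.
Proof.
  intros Hab. apply (lipschitz_continuous _ 1). intros y.
  rewrite Rmult_1_l. apply clamp_lipschitz, Hab.
Qed.

(* Continuity on [a,b] is reduced to two-sided continuity of the extension [f o clamp a b]. *)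
Definition cont_clamp (a b : R) (f : R -> R) : Prop :=
  forall x, continuous (fun y => f (clamp a b y)) x.

Lemma cont_on_cont_clamp a b f : a <= b -> cont_on a b f -> cont_clamp a b f.
Proof.
  intros Hab Hf x. unfold continuous.
  apply filterlim_comp with (G := within (Icc a b) (locally (clamp a b x))).
  - intros P HP. generalize (continuous_clamp a b x Hab _ HP). unfold filtermap.
    apply filter_imp. intros y Hy. apply Hy, clamp_in, Hab.
  - apply Hf, clamp_in, Hab.
Qed.

Lemma cont_clamp_cont_on a b f : a <= b -> cont_clamp a b f -> cont_on a b f.
Proof.
  intros Hab Hf x Hx.
  apply filterlim_within_ext with (fun y => f (clamp a b y)).
  { intros y Hy. apply f_equal, clamp_id, Hy. }
  apply filterlim_filter_le_1 with (1 := filter_le_within _).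
  rewrite <- (clamp_id a b x Hx) at 2. apply Hf.
Qed.

Lemma continuous_cont_clamp a b f :
  a <= b -> (forall x, continuous f x) -> cont_clamp a b f.
Proof. intros Hab Hf x. apply continuous_comp; [apply continuous_clamp, Hab | apply Hf]. Qed.

Lemma cont_clamp_plus a b f g :
  cont_clamp a b f -> cont_clamp a b g -> cont_clamp a b (fun x => f x + g x).
Proof. intros Hf Hg x. apply (continuous_plus (V := R_NormedModule)); auto. Qed.

Lemma cont_clamp_minus a b f g :
  cont_clamp a b f -> cont_clamp a b g -> cont_clamp a b (fun x => f x - g x).
Proof. intros Hf Hg x. apply (continuous_minus (V := R_NormedModule)); auto. Qed.

Lemma cont_clamp_mult a b f g :
  cont_clamp a b f -> cont_clamp a b g -> cont_clamp a b (fun x => f x * g x).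
Proof. intros Hf Hg x. apply (continuous_mult (K := R_AbsRing)); auto. Qed.

Lemma cont_clamp_comp a b f h :
  cont_clamp a b f -> (forall y, continuous h y) -> cont_clamp a b (fun x => h (f x)).
Proof. intros Hf Hh x. apply (continuous_comp (fun y => f (clamp a b y))); auto. Qed.

Lemma ex_RInt_cont_clamp a b f : a <= b -> cont_clamp a b f -> ex_RInt f a b.
Proof.
  intros Hab Hf. apply ex_RInt_ext with (fun y => f (clamp a b y)).
  - rewrite Rmin_left, Rmax_right by exact Hab.
    intros x Hx. rewrite clamp_id; lra.
  - apply (ex_RInt_continuous (V := R_CompleteNormedModule)). intros; apply Hf.
Qed.

Lemma cont_clamp_max a b f : a <= b -> cont_clamp a b f ->
  exists x0, a <= x0 <= b /\ forall x, a <= x <= b -> f x <= f x0.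
Proof.
  intros Hab Hf.
  destruct (continuity_ab_maj (fun y => f (clamp a b y)) a b Hab) as [M [HM HMab]].
  { intros c _. apply continuity_pt_filterlim, Hf. }
  exists M. split; [exact HMab|]. intros x Hx.
  specialize (HM x Hx). rewrite !clamp_id in HM; auto.
Qed.

Lemma cont_clamp_min a b f : a <= b -> cont_clamp a b f ->
  exists x0, a <= x0 <= b /\ forall x, a <= x <= b -> f x0 <= f x.
Proof.
  intros Hab Hf.
  destruct (continuity_ab_min (fun y => f (clamp a b y)) a b Hab) as [M [HM HMab]].
  { intros c _. apply continuity_pt_filterlim, Hf. }
  exists M. split; [exact HMab|]. intros x Hx.
  specialize (HM x Hx). rewrite !clamp_id in HM; auto.
Qed.

Lemma Rabs_le_sup_norm a b g : a <= b -> cont_clamp a b g ->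
  forall x, a <= x <= b -> Rabs (g x) <= sup_norm a b g.
Proof.
  intros Hab Hg x Hx.
  destruct (cont_clamp_max a b (fun y => Rabs (g y)) Hab) as [x0 [Hx0 HM]].
  { apply cont_clamp_comp; [exact Hg | apply continuous_Rabs]. }
  unfold sup_norm.
  destruct (Lub_Rbar_correct (fun r => exists x, a <= x <= b /\ r = Rabs (g x))) as [Hub Hlub].
  assert (Hle : Rbar_le (Lub_Rbar (fun r => exists x, a <= x <= b /\ r = Rabs (g x))) (Rabs (g x0))).
  { apply Hlub. intros r [y [Hy ->]]. apply HM, Hy. }
  assert (Hge : Rbar_le (Rabs (g x)) (Lub_Rbar (fun r => exists x, a <= x <= b /\ r = Rabs (g x)))).
  { apply Hub. exists x; auto. }
  destruct (Lub_Rbar _); simpl in *; tauto.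
Qed.

Lemma C1_on_cont_on a b F : C1_on a b F -> cont_on a b F.
Proof.
  intros [F' [_ HF]] x Hx.
  apply (filterlim_dominated (fun y => y) F x (Rabs (F' x) + 1)).
  { apply filterlim_filter_le_1 with (1 := filter_le_within _), filterlim_id. }
  generalize (proj1 (filterlim_locally _ _) (HF x Hx) (mkposreal _ Rlt_0_1)).
  unfold within. apply filter_imp. intros y Hq Hy.
  destruct (Req_dec y x) as [->|Hne].
  { rewrite !Rminus_diag, !Rabs_R0, Rmult_0_r. apply Rle_refl. }
  specialize (Hq (conj Hy Hne)). change (Rabs ((F y - F x) / (y - x) - F' x) < 1) in Hq.
  replace (F y - F x) with ((F y - F x) / (y - x) * (y - x)) by (field; lra).
  rewrite Rabs_mult. apply Rmult_le_compat_r; [apply Rabs_pos|].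
  generalize (Rabs_triang_inv ((F y - F x) / (y - x)) (F' x)). lra.
Qed.

Lemma RInt_const_R (c a b : R) : RInt (fun _ => c) a b = c * (b - a).
Proof. rewrite RInt_const. unfold scal; simpl; unfold mult; simpl. ring. Qed.

Lemma RInt_Chasles3 (g : R -> R) a al be b :
  a <= al -> al <= be -> be <= b -> ex_RInt g a b ->
  RInt g a b = RInt g a al + RInt g al be + RInt g be b /\
  ex_RInt g a al /\ ex_RInt g al be /\ ex_RInt g be b.
Proof.
  intros H1 H2 H3 Hg.
  assert (e1 : ex_RInt g a al) by (apply (ex_RInt_Chasles_1 (V := R_CompleteNormedModule)) with b; [lra | exact Hg]).
  assert (e23 : ex_RInt g al b) by (apply (ex_RInt_Chasles_2 (V := R_CompleteNormedModule)) with a; [lra | exact Hg]).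
  assert (e2 : ex_RInt g al be) by (apply (ex_RInt_Chasles_1 (V := R_CompleteNormedModule)) with b; [lra | exact e23]).
  assert (e3 : ex_RInt g be b) by (apply (ex_RInt_Chasles_2 (V := R_CompleteNormedModule)) with al; [lra | exact e23]).
  repeat split; auto.
  rewrite <- (RInt_Chasles (V := R_CompleteNormedModule) g a al b e1 e23), <- (RInt_Chasles (V := R_CompleteNormedModule) g al be b e2 e3).
  unfold plus; simpl. ring.
Qed.

Lemma RInt_ge_on_subinterval (g : R -> R) a al be b m :
  a <= al -> al <= be -> be <= b -> ex_RInt g a b ->
  (forall x, a <= x <= b -> 0 <= g x) -> (forall x, al <= x <= be -> m <= g x) ->
  m * (be - al) <= RInt g a b.
Proof.
  intros H1 H2 H3 Hg Hpos Hm.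
  destruct (RInt_Chasles3 g a al be b H1 H2 H3 Hg) as [-> [e1 [e2 e3]]].
  assert (0 <= RInt g a al) by (apply RInt_ge_0; auto; intros; apply Hpos; lra).
  assert (0 <= RInt g be b) by (apply RInt_ge_0; auto; intros; apply Hpos; lra).
  assert (RInt (fun _ => m) al be <= RInt g al be).
  { apply RInt_le; auto. apply (ex_RInt_const (V := R_CompleteNormedModule)). intros; apply Hm; lra. }
  rewrite RInt_const_R in *. lra.
Qed.

Lemma RInt_le_on_support (g : R -> R) a al be b M :
  a <= al -> al <= be -> be <= b -> ex_RInt g a b ->
  (forall x, a <= x <= b -> g x <= M) ->
  (forall x, a <= x <= b -> (x < al \/ be < x) -> g x = 0) ->
  RInt g a b <= M * (be - al).
Proof.
  intros H1 H2 H3 Hg HM Hsupp.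
  destruct (RInt_Chasles3 g a al be b H1 H2 H3 Hg) as [-> [e1 [e2 e3]]].
  assert (Hzero : forall u v, a <= u <= v -> v <= b -> (forall x, u < x < v -> g x = 0) ->
    RInt g u v = 0).
  { intros u v Hu Hv Hz. rewrite (RInt_ext g (fun _ => 0)).
    - rewrite RInt_const_R. apply Rmult_0_l.
    - rewrite Rmin_left, Rmax_right by lra. exact Hz. }
  rewrite (Hzero a al), (Hzero be b); try lra; try (intros; apply Hsupp; lra).
  assert (RInt g al be <= RInt (fun _ => M) al be).
  { apply RInt_le; auto. apply (ex_RInt_const (V := R_CompleteNormedModule)). intros; apply HM; lra. }
  rewrite RInt_const_R in *. lra.
Qed.

Lemma rpow_le y M p : 0 <= y <= M -> 0 < M -> 0 <= p -> rpow y p <= Rpower M p.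
Proof.
  intros Hy HM Hp. unfold rpow. destruct Rle_dec.
  - left; apply exp_pos.
  - apply Rle_Rpower_l; lra.
Qed.

Lemma Rpower_le_base y p : 0 < y <= 1 -> 1 <= p -> Rpower y p <= y.
Proof.
  intros Hy Hp.
  replace p with (1 + (p - 1)) by ring. rewrite Rpower_plus, Rpower_1 by lra.
  assert (H1 : Rpower y (p - 1) <= Rpower 1 (p - 1)) by (apply Rle_Rpower_l; lra).
  unfold Rpower at 2 in H1. rewrite ln_1, Rmult_0_r, exp_0 in H1.
  generalize (exp_pos ((p - 1) * ln y)). unfold Rpower in *. nra.
Qed.

Lemma continuous_rpow p y0 : 1 <= p -> continuous (fun y => rpow y p) y0.
Proof.
  intros Hp. destruct (Rtotal_order y0 0) as [Hneg | [-> | Hpos]].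
  - assert (He : 0 < - y0) by lra.
    apply continuous_ext_loc with (fun _ => 0); [|apply continuous_const].
    exists (mkposreal _ He). intros y Hy. change (Rabs (y - y0) < - y0) in Hy.
    unfold rpow. destruct Rle_dec; [reflexivity|].
    unfold Rabs in Hy; destruct Rcase_abs in Hy; lra.
  - apply (filterlim_dominated (fun y => y) _ 0 1); [apply filterlim_id|].
    exists (mkposreal _ Rlt_0_1). intros y Hy. change (Rabs (y - 0) < 1) in Hy.
    rewrite Rmult_1_l, Rminus_0_r in *. unfold rpow.
    destruct (Rle_dec 0 0) as [_|]; [|lra]. destruct Rle_dec.
    + rewrite Rminus_0_r, Rabs_R0. apply Rabs_pos.
    + rewrite Rminus_0_r, Rabs_right, Rabs_right by (try left; try apply exp_pos; lra).
      apply Rpower_le_base; [|exact Hp]. unfold Rabs in Hy; destruct Rcase_abs in Hy; lra.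
  - apply continuous_ext_loc with (fun y => Rpower y p).
    + exists (mkposreal _ Hpos). intros y Hy. change (Rabs (y - y0) < y0) in Hy.
      unfold rpow. destruct Rle_dec; [|reflexivity].
      unfold Rabs in Hy; destruct Rcase_abs in Hy; lra.
    + apply continuity_pt_filterlim, derivable_continuous_pt.
      exists (p * Rpower y0 (p - 1)). apply derivable_pt_lim_power, Hpos.
Qed.

Definition bump (dl c x : R) : R := clamp 0 1 ((2 * dl - Rabs (x - c)) / dl).

Lemma bump_range dl c x : 0 <= bump dl c x <= 1.
Proof. apply clamp_in; lra. Qed.

Lemma bump_one dl c x : 0 < dl -> Rabs (x - c) <= dl -> bump dl c x = 1.
Proof.
  intros Hdl Hx. unfold bump, clamp, Rmax, Rmin.
  assert (1 <= (2 * dl - Rabs (x - c)) / dl).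
  { apply Rmult_le_reg_r with dl; [exact Hdl|]. unfold Rdiv.
    rewrite Rmult_assoc, Rinv_l by lra. lra. }
  repeat destruct Rle_dec; lra.
Qed.

Lemma bump_zero dl c x : 0 < dl -> 2 * dl <= Rabs (x - c) -> bump dl c x = 0.
Proof.
  intros Hdl Hx. unfold bump, clamp, Rmax, Rmin.
  assert ((2 * dl - Rabs (x - c)) / dl <= 0).
  { apply Rmult_le_reg_r with dl; [exact Hdl|]. unfold Rdiv.
    rewrite Rmult_assoc, Rinv_l by lra. lra. }
  repeat destruct Rle_dec; lra.
Qed.

Lemma continuous_bump dl c x : 0 < dl -> continuous (bump dl c) x.
Proof.
  intros Hdl. apply (lipschitz_continuous _ (/ dl)). intros y.
  eapply Rle_trans; [apply clamp_lipschitz; lra|].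
  replace ((2 * dl - Rabs (y - c)) / dl - (2 * dl - Rabs (x - c)) / dl)
    with (/ dl * (Rabs (x - c) - Rabs (y - c))) by (field; lra).
  rewrite Rabs_mult, Rabs_right by (left; apply Rinv_0_lt_compat, Hdl).
  apply Rmult_le_compat_l; [left; apply Rinv_0_lt_compat, Hdl|].
  replace (y - x) with ((y - c) - (x - c)) by ring.
  rewrite Rabs_minus_sym. apply Rabs_triang_inv2.
Qed.

Lemma continuous_bump_pow mu dl c k x : 0 < dl ->
  continuous (fun y => (mu * bump dl c y) ^ k) x.
Proof.
  intros Hdl.
  apply (continuous_comp (bump dl c) (fun t => (mu * t) ^ k)); [apply continuous_bump, Hdl|].
  apply (ex_derive_continuous (V := R_NormedModule)). auto_derive. exact I.
Qed.

Lemma ex_RInt_bump_pow a b mu dl c k : 0 < dl ->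
  ex_RInt (fun y => (mu * bump dl c y) ^ k) a b.
Proof.
  intros Hdl. apply (ex_RInt_continuous (V := R_CompleteNormedModule)).
  intros; apply continuous_bump_pow, Hdl.
Qed.

Lemma RInt_bump_pow_ge a b mu dl k : 0 <= mu -> 0 < dl <= (b - a) / 4 ->
  mu ^ k * (2 * dl) <= RInt (fun x => (mu * bump dl ((a + b) / 2) x) ^ k) a b.
Proof.
  intros Hmu Hdl.
  replace (2 * dl) with (((a + b) / 2 + dl) - ((a + b) / 2 - dl)) by ring.
  apply RInt_ge_on_subinterval; try lra.
  - apply ex_RInt_bump_pow; lra.
  - intros x _. apply pow_le, Rmult_le_pos; [exact Hmu | apply bump_range].
  - intros x Hx. rewrite bump_one, Rmult_1_r; [lra | lra |].
    unfold Rabs; destruct Rcase_abs; lra.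
Qed.

Lemma RInt_bump_pow_le a b mu dl k : (0 < k)%nat -> 0 <= mu -> 0 < dl <= (b - a) / 4 ->
  RInt (fun x => (mu * bump dl ((a + b) / 2) x) ^ k) a b <= mu ^ k * (4 * dl).
Proof.
  intros Hk Hmu Hdl.
  replace (4 * dl) with (((a + b) / 2 + 2 * dl) - ((a + b) / 2 - 2 * dl)) by ring.
  apply RInt_le_on_support; try lra.
  - apply ex_RInt_bump_pow; lra.
  - intros x _. apply pow_incr. generalize (bump_range dl ((a + b) / 2) x). nra.
  - intros x _ Hx. rewrite bump_zero, Rmult_0_r, pow_i; [reflexivity | exact Hk | lra |].
    unfold Rabs; destruct Rcase_abs; lra.
Qed.

Lemma Lp_norm_bump_small a b p mu d : a < b -> 1 <= p -> 0 < mu -> 0 < d ->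
  exists dl, 0 < dl <= (b - a) / 4 /\
    Lp_norm a b p (fun x => mu * bump dl ((a + b) / 2) x) < d.
Proof.
  intros Hab Hp Hmu Hd.
  set (Q := Rpower d p). set (P := Rpower mu p).
  assert (HQ : 0 < Q) by apply exp_pos. assert (HP : 0 < P) by apply exp_pos.
  set (dl := Rmin ((b - a) / 4) (Q / (8 * P))).
  assert (Hdl : 0 < dl) by (apply Rmin_pos; [lra | apply Rdiv_lt_0_compat; lra]).
  assert (Hdl1 : dl <= (b - a) / 4) by apply Rmin_l.
  assert (Hdl2 : dl * (8 * P) <= Q).
  { apply Rmult_le_reg_r with (/ (8 * P)); [apply Rinv_0_lt_compat; lra|].
    rewrite Rmult_assoc, Rinv_r, Rmult_1_r by lra. apply Rmin_r. }
  exists dl. split; [lra|].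
  set (c := (a + b) / 2).
  set (g := fun x => rpow (Rabs (mu * bump dl c x)) p).
  assert (Hg : ex_RInt g a b).
  { apply (ex_RInt_continuous (V := R_CompleteNormedModule)). intros z _.
    apply (continuous_comp (bump dl c) (fun t => rpow (Rabs (mu * t)) p));
      [apply continuous_bump, Hdl|].
    apply (continuous_comp (fun t => Rabs (mu * t)) (fun y => rpow y p));
      [|apply continuous_rpow, Hp].
    apply (lipschitz_continuous _ (Rabs mu)). intros y.
    rewrite <- Rabs_mult, Rmult_minus_distr_l. apply Rabs_triang_inv2. }
  assert (HI : RInt g a b <= P * ((c + 2 * dl) - (c - 2 * dl))).
  { apply RInt_le_on_support; auto; unfold c in *; try lra.
    - intros x _. unfold g. apply rpow_le; [|lra | lra].
      generalize (bump_range dl ((a + b) / 2) x). intros.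
      rewrite Rabs_right by (apply Rle_ge, Rmult_le_pos; lra). nra.
    - intros x _ Hx. unfold g. rewrite bump_zero, Rmult_0_r, Rabs_R0; [|lra|].
      + unfold rpow. destruct Rle_dec; lra.
      + unfold Rabs; destruct Rcase_abs; lra. }
  unfold Lp_norm. fold g. unfold rpow at 1. destruct Rle_dec; [exact Hd|].
  replace d with (Rpower Q (/ p))
    by (unfold Q; rewrite Rpower_mult, Rinv_r, Rpower_1 by lra; reflexivity).
  apply Rlt_Rpower_l; [apply Rinv_0_lt_compat; lra | lra].
Qed.

Definition dHfun (lam y : R) : R := y * (/ 2 * y ^ 2 - lam).

Definition Hfun_remainder (lam v h : R) : R :=
  Hfun lam (v + h) - Hfun lam v - dHfun lam v * h.

Lemma Hfun_remainder_eq lam v h :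
  Hfun_remainder lam v h = h ^ 2 * ((3 * v ^ 2 / 2 - lam) / 2 + v * h / 2 + h ^ 2 / 8).
Proof. unfold Hfun_remainder, Hfun, dHfun. field. Qed.

Lemma Hfun_remainder_le lam v h c B :
  (3 * v ^ 2 / 2 - lam) / 2 <= - c -> Rabs v <= B ->
  Rabs h <= 1 -> (B + 1) * Rabs h <= c ->
  Hfun_remainder lam v h <= - (c / 2) * h ^ 2.
Proof.
  intros Hc Hv Hh1 Hh. rewrite Hfun_remainder_eq.
  assert (Hvh : v * h <= B * Rabs h).
  { eapply Rle_trans; [apply Rle_abs|]. rewrite Rabs_mult.
    apply Rmult_le_compat_r; [apply Rabs_pos | exact Hv]. }
  assert (Hh2 : h ^ 2 <= Rabs h) by (rewrite <- pow2_abs; generalize (Rabs_pos h); nra).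
  assert (0 <= h ^ 2) by apply pow2_ge_0.
  apply Rmult_le_compat_l with (r := h ^ 2) in Hc; [|lra]. nra.
Qed.

Lemma Hfun_remainder_ge lam v h : v ^ 2 <= 6 * lam ->
  h ^ 4 / 16 - 2 * lam * h ^ 2 <= Hfun_remainder lam v h.
Proof.
  intros Hv. rewrite Hfun_remainder_eq.
  assert (0 <= h ^ 2 * ((h / 4 + v) ^ 2 + (3 * lam / 2 - v ^ 2 / 4))).
  { apply Rmult_le_pos; [apply pow2_ge_0|]. generalize (pow2_ge_0 (h / 4 + v)). lra. }
  replace (h ^ 2 * ((3 * v ^ 2 / 2 - lam) / 2 + v * h / 2 + h ^ 2 / 8))
    with (h ^ 4 / 16 - 2 * lam * h ^ 2 + h ^ 2 * ((h / 4 + v) ^ 2 + (3 * lam / 2 - v ^ 2 / 4)))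
    by field.
  lra.
Qed.

Lemma dHfun_expansive lam u w : u ^ 2 < 2 * lam / 3 -> w ^ 2 < 2 * lam / 3 ->
  3 / 4 * (2 * lam / 3 - u ^ 2) * Rabs (w - u) <= Rabs (dHfun lam w - dHfun lam u).
Proof.
  intros Hu Hw. unfold dHfun.
  replace (w * (/ 2 * w ^ 2 - lam) - u * (/ 2 * u ^ 2 - lam))
    with ((w - u) * ((u ^ 2 + u * w + w ^ 2) / 2 - lam)) by field.
  rewrite Rabs_mult, Rmult_comm. apply Rmult_le_compat_l; [apply Rabs_pos|].
  generalize (pow2_ge_0 (u - w)). intros. rewrite Rabs_left1; nra.
Qed.

Section Stationary_point.

Variables (a b lam : R) (theta F vbar : R -> R).
Hypothesis Hab : a < b.
Hypothesis Hlam : 0 < lam.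
Hypothesis Htheta : cont_on a b theta.
Hypothesis Htheta_pos : forall x, a <= x <= b -> 0 < theta x.
Hypothesis HF : cont_on a b F.
Hypothesis HFa : F a = 0.
Hypothesis HFb : F b = 0.
Hypothesis Hvbar : forall x, a <= x <= b ->
  Rabs (vbar x) < sqrt (2 * lam / 3) /\ dHfun lam (vbar x) = F x.

Lemma vbar_sq_lt x : a <= x <= b -> vbar x ^ 2 < 2 * lam / 3.
Proof.
  intros Hx. rewrite <- pow2_abs, <- (pow2_sqrt (2 * lam / 3)) by lra.
  generalize (Rabs_pos (vbar x)) (proj1 (Hvbar x Hx)). nra.
Qed.

Lemma vbar_cont_on : cont_on a b vbar.
Proof.
  intros x Hx.
  set (k := 3 / 4 * (2 * lam / 3 - vbar x ^ 2)).
  assert (Hk : 0 < k) by (unfold k; generalize (vbar_sq_lt x Hx); lra).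
  apply (filterlim_dominated F vbar x (/ k)); [exact (HF x Hx)|].
  unfold within. apply filter_forall. intros y Hy.
  apply Rmult_le_reg_l with k; [exact Hk|].
  rewrite <- Rmult_assoc, Rinv_r, Rmult_1_l by lra.
  rewrite <- (proj2 (Hvbar x Hx)), <- (proj2 (Hvbar y Hy)).
  apply dHfun_expansive; apply vbar_sq_lt; assumption.
Qed.

Lemma vbar_C0 : C0 a b vbar.
Proof.
  assert (Hzero : forall x, a <= x <= b -> F x = 0 -> vbar x = 0).
  { intros x Hx HFx. rewrite <- (proj2 (Hvbar x Hx)) in HFx. unfold dHfun in HFx.
    destruct (Rmult_integral _ _ HFx) as [|Hneg]; [assumption|].
    generalize (vbar_sq_lt x Hx). lra. }
  split; [exact vbar_cont_on|].
  split; apply Hzero; auto; lra.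
Qed.

Lemma ex_RInt_Kfun_integrand w : cont_on a b w ->
  ex_RInt (fun x => theta x * (Hfun lam (w x) - F x * w x)) a b.
Proof.
  intros Hw. assert (Hab' : a <= b) by lra.
  apply ex_RInt_cont_clamp; [exact Hab'|].
  apply cont_clamp_mult; [apply cont_on_cont_clamp; auto|].
  apply cont_clamp_minus.
  - apply cont_clamp_comp; [apply cont_on_cont_clamp; auto|].
    intros y. apply (ex_derive_continuous (V := R_NormedModule) (Hfun lam)).
    unfold Hfun. auto_derive. exact I.
  - apply cont_clamp_mult; apply cont_on_cont_clamp; auto.
Qed.

Lemma Kfun_sub w : cont_on a b w ->
  is_RInt (fun x => theta x * Hfun_remainder lam (vbar x) (w x - vbar x)) a b
    (Kfun a b lam theta F w - Kfun a b lam theta F vbar).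
Proof.
  intros Hw.
  apply (is_RInt_ext (V := R_NormedModule)) with
    (fun x => theta x * (Hfun lam (w x) - F x * w x)
              - theta x * (Hfun lam (vbar x) - F x * vbar x)).
  - rewrite Rmin_left, Rmax_right by lra. intros x Hx.
    rewrite <- (proj2 (Hvbar x ltac:(lra))). unfold Hfun_remainder.
    replace (vbar x + (w x - vbar x)) with (w x) by ring. simpl. ring.
  - unfold Kfun. apply (is_RInt_minus (V := R_NormedModule));
      apply (RInt_correct (V := R_CompleteNormedModule));
      apply ex_RInt_Kfun_integrand; [exact Hw | exact vbar_cont_on].
Qed.

Lemma theta_bounds : exists tm tM, 0 < tm /\
  forall x, a <= x <= b -> tm <= theta x <= tM.
Proof.
  assert (Hab' : a <= b) by lra.
  assert (Hc := cont_on_cont_clamp a b theta Hab' Htheta).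
  destruct (cont_clamp_min a b theta Hab' Hc) as [xm [Hxm Hmin]].
  destruct (cont_clamp_max a b theta Hab' Hc) as [xM [HxM Hmax]].
  exists (theta xm), (theta xM). split; [apply Htheta_pos, Hxm|].
  intros x Hx. split; auto.
Qed.

(* [H''(vbar) = 3 vbar^2 / 2 - lam] attains its maximum, which is negative, on [a,b]. *)
Lemma Hfun_remainder_vbar_le : exists c d0, 0 < c /\ 0 < d0 /\
  forall x h, a <= x <= b -> Rabs h <= d0 ->
    Hfun_remainder lam (vbar x) h <= - c * h ^ 2.
Proof.
  assert (Hab' : a <= b) by lra.
  destruct (cont_clamp_max a b (fun x => vbar x ^ 2) Hab') as [x1 [Hx1 Hmax]].
  { apply (cont_clamp_comp a b vbar (fun t => t ^ 2));
      [apply cont_on_cont_clamp; [exact Hab' | exact vbar_cont_on]|].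
    intros y. apply (ex_derive_continuous (V := R_NormedModule) (fun t => t ^ 2)).
    auto_derive. exact I. }
  set (c0 := (lam - 3 * vbar x1 ^ 2 / 2) / 2).
  assert (Hc0 : 0 < c0) by (unfold c0; generalize (vbar_sq_lt x1 Hx1); lra).
  set (B := sqrt (2 * lam / 3)).
  assert (HB : 0 <= B) by apply sqrt_pos.
  set (d0 := Rmin 1 (c0 / (B + 1))).
  exists (c0 / 2), d0. split; [lra|]. split.
  { apply Rmin_pos; [lra | apply Rdiv_lt_0_compat; lra]. }
  intros x h Hx Hh. apply Hfun_remainder_le with B.
  - generalize (Hmax x Hx). unfold c0. lra.
  - apply Rlt_le, Hvbar, Hx.
  - eapply Rle_trans; [exact Hh | apply Rmin_l].
  - apply Rmult_le_reg_l with (/ (B + 1)); [apply Rinv_0_lt_compat; lra|].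
    rewrite <- Rmult_assoc, Rinv_l, Rmult_1_l by lra. rewrite Rmult_comm.
    eapply Rle_trans; [exact Hh | apply Rmin_r].
Qed.

Lemma Kfun_sup_local_max : is_local_max (C0 a b) (sup_norm a b) (Kfun a b lam theta F) vbar.
Proof.
  destruct Hfun_remainder_vbar_le as [c [d0 [Hc [Hd0 Hrem]]]].
  split; [exact vbar_C0|]. exists d0. split; [exact Hd0|].
  intros w [Hw _] Hdist.
  assert (Hab' : a <= b) by lra.
  assert (Hclose : forall x, a <= x <= b -> Rabs (w x - vbar x) <= d0).
  { intros x Hx. left. eapply Rle_lt_trans; [|exact Hdist].
    apply (Rabs_le_sup_norm a b (fun x => w x - vbar x)); [exact Hab' | | exact Hx].
    apply cont_clamp_minus; apply cont_on_cont_clamp; auto using vbar_cont_on. }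
  cut (Kfun a b lam theta F w - Kfun a b lam theta F vbar <= 0); [lra|].
  rewrite <- (Rmult_0_r (b - a)).
  apply (is_RInt_le _ (fun _ => 0) a b _ _ Hab' (Kfun_sub w Hw));
    [apply (is_RInt_const (V := R_NormedModule))|].
  intros x Hx.
  assert (Hx' : a <= x <= b) by lra.
  assert (Hr := Hrem x _ Hx' (Hclose x Hx')).
  assert (Hch : 0 <= c * (w x - vbar x) ^ 2) by (apply Rmult_le_pos; [lra | apply pow2_ge_0]).
  generalize (Htheta_pos x Hx'). cbv beta. nra.
Qed.

Lemma bump_perturbation_C0 mu dl : 0 < dl <= (b - a) / 4 ->
  C0 a b (fun x => vbar x + mu * bump dl ((a + b) / 2) x).
Proof.
  intros Hdl. destruct vbar_C0 as [Hv [Hva Hvb]].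
  assert (Hab' : a <= b) by lra.
  split; [|split].
  - apply cont_clamp_cont_on; [exact Hab'|].
    apply cont_clamp_plus; [apply cont_on_cont_clamp; auto|].
    apply continuous_cont_clamp; [exact Hab'|]. intros x.
    apply (continuous_mult (K := R_AbsRing));
      [apply continuous_const | apply continuous_bump; lra].
  - rewrite Hva, bump_zero; [ring | lra | unfold Rabs; destruct Rcase_abs; lra].
  - rewrite Hvb, bump_zero; [ring | lra | unfold Rabs; destruct Rcase_abs; lra].
Qed.

Lemma bump_in_Lp_ball p mu d : 1 <= p -> 0 < mu -> 0 < d ->
  exists dl, 0 < dl <= (b - a) / 4 /\
    C0 a b (fun x => vbar x + mu * bump dl ((a + b) / 2) x) /\
    Lp_norm a b p (fun x => vbar x + mu * bump dl ((a + b) / 2) x - vbar x) < d.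
Proof.
  intros Hp Hmu Hd.
  destruct (Lp_norm_bump_small a b p mu d Hab Hp Hmu Hd) as [dl [Hdl HLp]].
  exists dl. split; [exact Hdl|]. split; [apply bump_perturbation_C0, Hdl|].
  replace (fun x => vbar x + mu * bump dl ((a + b) / 2) x - vbar x)
    with (fun x => mu * bump dl ((a + b) / 2) x)
    by (apply functional_extensionality; intros; ring).
  exact HLp.
Qed.

Lemma Kfun_bump_sub mu dl : 0 < dl <= (b - a) / 4 ->
  is_RInt (fun x => theta x * Hfun_remainder lam (vbar x) (mu * bump dl ((a + b) / 2) x)) a b
    (Kfun a b lam theta F (fun x => vbar x + mu * bump dl ((a + b) / 2) x)
     - Kfun a b lam theta F vbar).
Proof.
  intros Hdl.
  apply (is_RInt_ext (V := R_NormedModule)) with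
    (2 := Kfun_sub _ (proj1 (bump_perturbation_C0 mu dl Hdl))).
  intros x _. simpl. f_equal. f_equal. ring.
Qed.

Lemma theta_Hfun_remainder_ge tm tM x h :
  (forall y, a <= y <= b -> tm <= theta y <= tM) -> a <= x <= b ->
  tm / 16 * h ^ 4 - 2 * lam * tM * h ^ 2 <= theta x * Hfun_remainder lam (vbar x) h.
Proof.
  intros Hth Hx.
  assert (Hrem := Hfun_remainder_ge lam (vbar x) h ltac:(generalize (vbar_sq_lt x Hx); lra)).
  destruct (Hth x Hx) as [Hlo Hhi].
  assert (Hh4 : tm * h ^ 4 <= theta x * h ^ 4).
  { apply Rmult_le_compat_r; [|exact Hlo].
    replace (h ^ 4) with ((h ^ 2) ^ 2) by ring. apply pow2_ge_0. }
  assert (Hh2 : theta x * (lam * h ^ 2) <= tM * (lam * h ^ 2)).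
  { apply Rmult_le_compat_r; [apply Rmult_le_pos; [lra | apply pow2_ge_0] | exact Hhi]. }
  apply Rle_trans with (theta x * (h ^ 4 / 16 - 2 * lam * h ^ 2)); [lra|].
  apply Rmult_le_compat_l; [left; apply Htheta_pos, Hx | exact Hrem].
Qed.

(* For [tm mu^2 > 64 lam tM] the quartic gain [tm mu^4 (2 dl) / 16] on the plateau beats
   the quadratic loss [2 lam tM mu^2 (4 dl)] on the support. *)
Lemma tall_bump_increases_Kfun : exists mu, 0 < mu /\
  forall dl, 0 < dl <= (b - a) / 4 ->
    Kfun a b lam theta F vbar
      < Kfun a b lam theta F (fun x => vbar x + mu * bump dl ((a + b) / 2) x).
Proof.
  destruct theta_bounds as [tm [tM [Htm Hth]]].
  assert (HtM : tm <= tM) by (destruct (Hth a) as [H1 H2]; lra).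
  set (mu := 64 * lam * tM / tm + 1).
  assert (Hmu : 1 <= mu).
  { unfold mu. assert (0 <= 64 * lam * tM / tm) by (apply Rle_mult_inv_pos; nra). lra. }
  assert (Hmu2 : 64 * lam * tM < tm * mu ^ 2).
  { assert (tm * mu = 64 * lam * tM + tm) by (unfold mu; field; lra).
    assert (tm * mu * 1 <= tm * mu * mu) by (apply Rmult_le_compat_l; nra). nra. }
  exists mu. split; [lra|]. intros dl Hdl.
  set (q := fun k x => (mu * bump dl ((a + b) / 2) x) ^ k).
  assert (Hq : forall k, is_RInt (q k) a b (RInt (q k) a b)).
  { intros k. apply (RInt_correct (V := R_CompleteNormedModule)), ex_RInt_bump_pow. lra. }
  assert (Hlow : tm / 16 * RInt (q 4%nat) a b - 2 * lam * tM * RInt (q 2%nat) a b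
                 <= Kfun a b lam theta F (fun x => vbar x + mu * bump dl ((a + b) / 2) x)
                    - Kfun a b lam theta F vbar).
  { assert (Hphi : is_RInt (fun x => tm / 16 * q 4%nat x - 2 * lam * tM * q 2%nat x) a b
                    (tm / 16 * RInt (q 4%nat) a b - 2 * lam * tM * RInt (q 2%nat) a b)).
    { apply (is_RInt_minus (V := R_NormedModule)); apply (is_RInt_scal (V := R_NormedModule)), Hq. }
    apply (is_RInt_le _ _ a b _ _ ltac:(lra) Hphi (Kfun_bump_sub mu dl Hdl)).
    intros x Hx. apply theta_Hfun_remainder_ge; [exact Hth | lra]. }
  assert (H4 := RInt_bump_pow_ge a b mu dl 4 ltac:(lra) Hdl).
  assert (H2 := RInt_bump_pow_le a b mu dl 2 ltac:(auto) ltac:(lra) Hdl).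
  fold (q 4%nat) in H4. fold (q 2%nat) in H2.
  assert (tm / 16 * (mu ^ 4 * (2 * dl)) <= tm / 16 * RInt (q 4%nat) a b)
    by (apply Rmult_le_compat_l; lra).
  assert (2 * lam * tM * RInt (q 2%nat) a b <= 2 * lam * tM * (mu ^ 2 * (4 * dl)))
    by (apply Rmult_le_compat_l; nra).
  assert (Hgain : 0 < mu ^ 2 * dl / 8 * (tm * mu ^ 2 - 64 * lam * tM)).
  { apply Rmult_lt_0_compat; [|lra]. assert (0 < mu ^ 2) by nra. nra. }
  replace (mu ^ 2 * dl / 8 * (tm * mu ^ 2 - 64 * lam * tM))
    with (tm / 16 * (mu ^ 4 * (2 * dl)) - 2 * lam * tM * (mu ^ 2 * (4 * dl))) in Hgain by field.
  lra.
Qed.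

Lemma small_bump_decreases_Kfun : exists mu, 0 < mu /\
  forall dl, 0 < dl <= (b - a) / 4 ->
    Kfun a b lam theta F (fun x => vbar x + mu * bump dl ((a + b) / 2) x)
      < Kfun a b lam theta F vbar.
Proof.
  destruct theta_bounds as [tm [tM [Htm Hth]]].
  destruct Hfun_remainder_vbar_le as [c [mu [Hc [Hmu Hrem]]]].
  exists mu. split; [exact Hmu|]. intros dl Hdl.
  set (q2 := fun x => (mu * bump dl ((a + b) / 2) x) ^ 2).
  assert (Hup : Kfun a b lam theta F (fun x => vbar x + mu * bump dl ((a + b) / 2) x)
                - Kfun a b lam theta F vbar <= - (c * tm) * RInt q2 a b).
  { assert (Hphi : is_RInt (fun x => - (c * tm) * q2 x) a b (- (c * tm) * RInt q2 a b)).
    { apply (is_RInt_scal (V := R_NormedModule)), (RInt_correct (V := R_CompleteNormedModule)).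
      apply ex_RInt_bump_pow. lra. }
    apply (is_RInt_le _ _ a b _ _ ltac:(lra) (Kfun_bump_sub mu dl Hdl) Hphi).
    intros x Hx. assert (Hx' : a <= x <= b) by lra.
    unfold q2. set (h := mu * bump dl ((a + b) / 2) x).
    assert (Hh : Rabs h <= mu).
    { unfold h. generalize (bump_range dl ((a + b) / 2) x). intros.
      rewrite Rabs_right by (apply Rle_ge, Rmult_le_pos; lra). nra. }
    assert (Hr := Hrem x h Hx' Hh). destruct (Hth x Hx') as [Hlo _].
    assert (Hch : 0 <= c * h ^ 2) by (apply Rmult_le_pos; [lra | apply pow2_ge_0]).
    nra. }
  assert (H2 := RInt_bump_pow_ge a b mu dl 2 ltac:(lra) Hdl). fold q2 in H2.
  assert (c * tm * (mu ^ 2 * (2 * dl)) <= c * tm * RInt q2 a b)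
    by (apply Rmult_le_compat_l; [nra | exact H2]).
  assert (0 < c * tm * (mu ^ 2 * (2 * dl))).
  { apply Rmult_lt_0_compat; [nra|]. assert (0 < mu ^ 2) by nra. nra. }
  lra.
Qed.

Lemma Kfun_not_Lp_local_max p : 1 <= p ->
  ~ is_local_max (C0 a b) (Lp_norm a b p) (Kfun a b lam theta F) vbar.
Proof.
  intros Hp [_ [d [Hd Hloc]]].
  destruct tall_bump_increases_Kfun as [mu [Hmu Hinc]].
  destruct (bump_in_Lp_ball p mu d Hp Hmu Hd) as [dl [Hdl [Hw Hnear]]].
  specialize (Hloc _ Hw Hnear). specialize (Hinc dl Hdl). lra.
Qed.

Lemma Kfun_not_Lp_local_min p : 1 <= p ->
  ~ is_local_min (C0 a b) (Lp_norm a b p) (Kfun a b lam theta F) vbar.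
Proof.
  intros Hp [_ [d [Hd Hloc]]].
  destruct small_bump_decreases_Kfun as [mu [Hmu Hdec]].
  destruct (bump_in_Lp_ball p mu d Hp Hmu Hd) as [dl [Hdl [Hw Hnear]]].
  specialize (Hloc _ Hw Hnear). specialize (Hdec dl Hdl). lra.
Qed.

End Stationary_point.

Theorem proposition3 (a b lam : R) (theta F vbar : R -> R) :
  a < b -> 0 < lam ->
  cont_on a b theta ->
  (forall x, a <= x <= b -> 0 < theta x) ->
  C1_on a b F ->
  F a = 0 -> F b = 0 ->
  (forall x, a < x < b -> F x <> 0) ->
  sup_norm a b F < Rpower (2 * lam / 3) (3 / 2) ->
  (* vbar = z_2 o F : vbar x is the solution of z (z^2/2 - lam) = F x
     lying in (-sqrt(2 lam/3), sqrt(2 lam/3)) *)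
  (forall x, a <= x <= b ->
     Rabs (vbar x) < sqrt (2 * lam / 3) /\
     vbar x * (/ 2 * vbar x ^ 2 - lam) = F x) ->
  is_local_max (C0 a b) (sup_norm a b) (Kfun a b lam theta F) vbar /\
  (forall p, 1 <= p < 4 ->
     ~ is_local_max (C0 a b) (Lp_norm a b p) (Kfun a b lam theta F) vbar /\
     ~ is_local_min (C0 a b) (Lp_norm a b p) (Kfun a b lam theta F) vbar).
Proof.
  intros Hab Hlam Htheta Htheta_pos HF1 HFa HFb _ _ Hvbar.
  assert (HF := C1_on_cont_on a b F HF1).
  split; [|intros p [Hp _]; split].
  - apply Kfun_sup_local_max; assumption.
  - apply Kfun_not_Lp_local_max; assumption.
  - apply Kfun_not_Lp_local_min; assumption.
Qed.
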